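(* If $f\in\mathcal S(X)$ is skew invertible (as an element of $\mathcal F(X)$), then its skew inverse $f^{\langle-1\rangle}$ belongs to $\mathcal S(X)$.
   Context: Let $K$ be a skew field, $K^*=K\setminus\{0\}$, and $X$ a nonempty set with a left $K^*$-action $(a,x)\mapsto{}^{a}x$. $\mathcal F(X)$ is the set of functions $X\to K$ with pointwise addition; the constant function with value $a\in K$ is denoted $a$. The skew product is $(f\diamond g)(x)=f({}^{g(x)}x)\,g(x)$ if $g(x)\neq0$ and $0$ if $g(x)=0$. A function $f$ is skew convex if $f\diamond(a+b)=f\diamond a+f\diamond b$ for all $a,b\in K$; $\mathcal S(X)$ is the set of skew-convex functions. $f\in\mathcal F(X)$ is skew invertible if there is $g\in\mathcal F(X)$ with $f\diamond g=g\diamond f=1$; then $g$ is called the skew inverse $f^{\langle-1\rangle}$. *)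

From mathcomp Require Import all_boot all_algebra.
Set Implicit Arguments. Unset Strict Implicit. Unset Printing Implicit Defensive.
Import GRing.Theory.
Local Open Scope ring_scope.

Definition skew_field (K : unitRingType) : Prop :=
  forall a : K, a != 0 -> a \is a GRing.unit.

(* A left action of K^* = K \ {0} on X, given by act : K -> X -> X; its
   values at a = 0 are irrelevant and unconstrained. *)
Definition left_action_units (K : unitRingType) (X : Type) (act : K -> X -> X) : Prop :=
  (forall x, act 1 x = x) /\
  (forall a b x, a != 0 -> b != 0 -> act a (act b x) = act (a * b) x).

Definition skew_prod (K : unitRingType) (X : Type) (act : K -> X -> X)
  (f g : X -> K) : X -> K :=
  fun x => if g x == 0 then 0 else f (act (g x) x) * g x.

Definition skew_convex (K : unitRingType) (X : Type) (act : K -> X -> X)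
  (f : X -> K) : Prop :=
  forall a b : K,
    skew_prod act f (fun _ => a + b) =
    (fun x => skew_prod act f (fun _ => a) x + skew_prod act f (fun _ => b) x).

Definition skew_inverse (K : unitRingType) (X : Type) (act : K -> X -> X)
  (f g : X -> K) : Prop :=
  skew_prod act f g = (fun _ => 1) /\ skew_prod act g f = (fun _ => 1).

From mathcomp Require Import all_boot all_algebra.
From Stdlib Require Import FunctionalExtensionality.
Import GRing.Theory.
Set Implicit Arguments.
Unset Strict Implicit.
Unset Printing Implicit Defensive.
Local Open Scope ring_scope.

(* Fix a point x.  For a function h, the map c |-> (h <> c)(x) on constants
   sends c to h(^c x) c (and 0 to 0).  Write phi and psi for these maps
   attached to f and g.
   - If f <> g = 1 and g <> f = 1, neither f nor g vanishes anywhere, so in a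
     skew field their values are units; hence phi c = 0 forces c = 0.
   - Skew convexity of f says that phi is additive; with a trivial kernel it
     is therefore injective.
   - Using the action law ^a(^c x) = ^(a c) x, the identity f <> g = 1 at the
     point ^c x gives phi (psi c) = c: psi is a right inverse of phi.
   Then phi (psi (a + b)) = a + b = phi (psi a + psi b), and injectivity of
   phi yields psi (a + b) = psi a + psi b, i.e. g is skew convex. *)

Lemma additive_kernel0_inj (V W : zmodType) (h : V -> W) :
  {morph h : u v / u + v} -> (forall c, h c = 0 -> c = 0) -> injective h.
Proof.
move=> hD h0 u v huv; apply/subr0_eq/h0/(addIr (h v)).
by rewrite -hD subrK huv add0r.
Qed.

Section SkewProduct.

Variables (K : unitRingType) (X : Type) (act : K -> X -> X).

Definition skew_const (h : X -> K) (x : X) (c : K) : K :=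
  skew_prod act h (fun _ => c) x.

Lemma skew_prod_one_neq0 (h k : X -> K) :
  skew_prod act h k = (fun _ => 1) -> forall y, k y != 0.
Proof.
move=> hk1 y; apply/negP => /eqP ky0.
have := congr1 (fun m => m y) hk1; rewrite /skew_prod /= ky0 eqxx => /eqP.
by rewrite eq_sym oner_eq0.
Qed.

Hypothesis HK : skew_field K.

Lemma skew_const_eq0 (h : X -> K) (x : X) :
  (forall y, h y != 0) -> forall c, skew_const h x c = 0 -> c = 0.
Proof.
move=> hnz c; rewrite /skew_const /skew_prod; case: eqP => // _ /eqP.
by rewrite (mulrI_eq0 _ (mulrI (HK (hnz _)))) => /eqP.
Qed.

Hypothesis Hact : left_action_units act.

Lemma skew_const_right_inverse (h k : X -> K) (x : X) :
  skew_prod act h k = (fun _ => 1) ->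
  forall c, skew_const h x (skew_const k x c) = c.
Proof.
move=> hk1 c; rewrite /skew_const /skew_prod.
have [->|c_nz] := eqVneq c 0; first by rewrite eqxx.
have knz := skew_prod_one_neq0 hk1.
have kc_nz : k (act c x) * c != 0.
  by rewrite (mulrI_eq0 _ (mulrI (HK (knz _)))).
rewrite (negbTE kc_nz) -(proj2 Hact) // mulrA.
have := congr1 (fun m => m (act c x)) hk1; rewrite /skew_prod /= (negbTE (knz _)).
by move=> ->; rewrite mul1r.
Qed.

End SkewProduct.

Theorem lemma2p8 (K : unitRingType) (X : Type) (act : K -> X -> X)
  (HK : skew_field K) (HX : inhabited X) (Hact : left_action_units act)
  (f g : X -> K) :
  skew_convex act f -> skew_inverse act f g -> skew_convex act g.
Proof.
move=> f_convex [fg1 gf1] a b; apply: functional_extensionality => x.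
pose phi := skew_const act f x; pose psi := skew_const act g x.
have phiD : {morph phi : u v / u + v} by move=> u v; rewrite /phi /skew_const f_convex.
have phi_inj : injective phi.
  exact/additive_kernel0_inj/skew_const_eq0/skew_prod_one_neq0/gf1.
have phiK : forall c, phi (psi c) = c := skew_const_right_inverse HK Hact x fg1.
change (psi (a + b) = psi a + psi b).
by apply: phi_inj; rewrite phiD !phiK.
Qed.
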